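(* Let $\k$ be a field, $n\ge3$, and for $1\le i\le n$ let $V^{(i)}$ be the $(n-2)$-dimensional vector space of vectors with zero coordinate sum in $\bigoplus_{j\ne i}\k\,v^{(i)}_j$. Let $S=S^\bullet(V^{(1)}\oplus\cdots\oplus V^{(n)})$ be the polynomial algebra, $\mathbb{Z}^n$-graded with $V^{(i)}$ in degree $e_i$, let $S_{>0}$ be its augmentation ideal, let $J\subset (S_{>0})^2$ be a homogeneous ideal, and let $A=S/J$. Let $A\langle e_1\rangle$ denote the degree-$e_1$ component of $A$ and set $$K=\ker\big(A\otimes A\langle e_1\rangle\to A(e_1)\big),$$ the kernel of multiplication, an $A$-module. Then there is a natural exact sequence of $\mathbb{Z}^n$-graded vector spaces $$\k^{(n-2)(n-3)/2}(-e_1)\to K\otimes_A\k\xrightarrow{f}(J(e_1)\otimes_S\k)_{\ge0}\to0.$$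
   Context: For a graded module $M$ and $d\in\mathbb{Z}^n$, $M(d)$ is the shifted module with $M(d)_c=M_{c+d}$; in $A\otimes A\langle e_1\rangle$ the factor $A\langle e_1\rangle$ is placed in degree $0$, so the multiplication map $A_c\otimes A\langle e_1\rangle\to A_{c+e_1}$ is homogeneous of degree $0$ to $A(e_1)$. $\k^{r}(-e_1)$ denotes an $r$-dimensional space concentrated in degree $e_1$. For a graded space $W$, $W_{\ge0}$ is the sum of its components in degrees $c\in\mathbb{Z}_{\ge0}^n$. *)

From mathcomp Require Import all_boot all_algebra.
From mathcomp Require Import mpoly.

Set Implicit Arguments.
Unset Strict Implicit.
Unset Printing Implicit Defensive.

Import GRing.Theory.
Local Open Scope ring_scope.

(* S = Sym(V^(1) (+) ... (+) V^(n)), with dim V^(i) = n-2, is modelled  *)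
(* as the polynomial ring in the n*(n-2) variables                      *)
(*    x_(i,a) := 'X_(mxvec_index i a),  i : 'I_n, a : 'I_(n-2),          *)
(* where (x_(i,a))_a is a basis of V^(i) (e.g. v^(i)_j - v^(i)_last).    *)
(* x_(i,a) has Z^n-degree e_i.  The block i = 0 is V^(1), degree e_1.   *)

Definition Spoly (k : fieldType) (n : nat) := {mpoly k[n * (n - 2)]}.

Definition degv (n : nat) := 'I_n -> nat.

Definition mdegi (n : nat) (m : 'X_{1..n * (n - 2)}) (i : 'I_n) : nat :=
  (\sum_(a < n - 2) m (mxvec_index i a))%N.

Definition e1 (n : nat) : degv n := fun i => nat_of_bool (nat_of_ord i == 0%N).
Definition plus_e1 (n : nat) (c : degv n) : degv n := fun i => (c i + e1 i)%N.

(* p is homogeneous of Z^n-degree c (0 is homogeneous of every degree) *)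
Definition zhomog (k : fieldType) (n : nat) (c : degv n) (p : Spoly k n) : bool :=
  all (fun m => [forall i, mdegi m i == c i]) (msupp p).

Definition hcomp (k : fieldType) (n : nat) (c : degv n) (p : Spoly k n) : Spoly k n :=
  \sum_(m <- msupp p | [forall i, mdegi m i == c i]) p@_m *: 'X_[m].

Definition is_hom_ideal (k : fieldType) (n : nat) (J : Spoly k n -> Prop) : Prop :=
  [/\ J 0,
      (forall p q, J p -> J q -> J (p + q)),
      (forall a p, J p -> J (a * p)) &
      (forall c p, J p -> J (hcomp c p))].

(* membership in (S_{>0})^2 : no monomials of total degree 0 or 1 *)
Definition in_aug_sq (k : fieldType) (n : nat) (p : Spoly k n) : Prop :=
  forall m, m \in msupp p -> (1 < mdeg m)%N.

Definition in_aug (k : fieldType) (n : nat) (p : Spoly k n) : Prop :=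
  p@_0%MM = 0.

Definition in_augJ (k : fieldType) (n : nat) (J : Spoly k n -> Prop)
    (p : Spoly k n) : Prop :=
  exists (r : nat) (t q : 'I_r -> Spoly k n),
    (forall l, in_aug (t l) /\ J (q l)) /\ p = \sum_(l < r) t l * q l.

(* A = S/J.  Since J \subset (S_{>0})^2, A<e_1> = S_{e_1} = V^(1) with  *)
(* basis x_(1,a), so A (x) A<e_1> = A^(n-2) and the multiplication map  *)
(* sends (s_a)_a to sum_a s_a x_(1,a).  We work with lifts to S:        *)
(*   mu s     == sum_a s_a x_(1,a)   (lift of the multiplication map)   *)
(*   Ksyz J s <-> s in S^(n-2) lifts an element of K (mu s in J)        *)
(*   Kzero J s <-> s lies in J^(n-2) + S_{>0} Ksyz, i.e. s represents   *)
(*                 0 in K (x)_A k = K / A_{>0} K.                       *)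
(* The map f : K (x)_A k -> J(e_1) (x)_S k = J/S_{>0}J (shifted) is     *)
(*   class of s |-> class of mu s.                                      *)

Definition mu (k : fieldType) (n : nat) (s : 'I_(n - 2) -> Spoly k n) : Spoly k n :=
  \sum_(i < n | nat_of_ord i == 0%N) \sum_(a < n - 2) s a * 'X_(mxvec_index i a).

Definition Ksyz (k : fieldType) (n : nat) (J : Spoly k n -> Prop)
    (s : 'I_(n - 2) -> Spoly k n) : Prop := J (mu s).

Definition Kzero (k : fieldType) (n : nat) (J : Spoly k n -> Prop)
    (s : 'I_(n - 2) -> Spoly k n) : Prop :=
  exists (j : 'I_(n - 2) -> Spoly k n) (r : nat) (t : 'I_r -> Spoly k n)
         (u : 'I_r -> 'I_(n - 2) -> Spoly k n),
    [/\ (forall a, J (j a)),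
        (forall l, in_aug (t l) /\ Ksyz J (u l)) &
        (forall a, s a = j a + \sum_(l < r) t l * u l a)].

Definition zhomog_tuple (k : fieldType) (n : nat) (c : degv n)
    (s : 'I_(n - 2) -> Spoly k n) : Prop := forall a, zhomog c (s a).

From mathcomp Require Import all_boot all_algebra.
From mathcomp Require Import mpoly.
From mathcomp Require Import ring.

Set Implicit Arguments.
Unset Strict Implicit.
Unset Printing Implicit Defensive.

Import GRing.Theory.
Local Open Scope ring_scope.

(* Write x_a (a < n-2) for the basis of V^(1) and mu s = sum_a s_a x_a.  If
   p in J has degree c + e_1 with c >= 0, every monomial of p contains some
   x_a, so p = mu s with s homogeneous of degree c: f is onto.
   If mu s lies in S_{>0} J, split every factor of such an expression into its
   monomials of positive and of zero degree in V^(1); both parts of a factor of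
   J are in J since J is homogeneous, the products of two zero-degree parts
   cancel because mu s has none, and the rest is mu s0 for an s0 representing 0
   in K (x)_A k.  Then s - s0 is a syzygy of the variables x_a, hence an
   S-combination of the Koszul relations x_b e_a - x_a e_b; modulo S_{>0} only
   the constant coefficients survive, which is the image of
   wedge^2 V^(1) = k^((n-2)(n-3)/2).
   The hypothesis J \subset (S_{>0})^2 only serves to identify A<e_1> with
   V^(1), which the definition of K already builds in; it is not used again. *)

Section SupportRestriction.
Variables (R : comNzRingType) (nv : nat).
Implicit Types (p q : {mpoly R[nv]}) (phi : pred 'X_{1..nv}).

Definition supp_in phi p := all phi (msupp p).

Lemma supp_inP phi p : reflect {in msupp p, forall m, phi m} (supp_in phi p).
Proof. exact: allP. Qed.

Lemma supp_in0 phi : supp_in phi 0.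
Proof. by rewrite /supp_in msupp0. Qed.

Lemma supp_inD phi p q : supp_in phi p -> supp_in phi q -> supp_in phi (p + q).
Proof.
move=> /supp_inP hp /supp_inP hq; apply/supp_inP => m /msuppD_le.
by rewrite mem_cat => /orP[/hp|/hq].
Qed.

Lemma supp_inN phi p : supp_in phi p -> supp_in phi (- p).
Proof. by rewrite /supp_in (perm_all _ (msuppN p)). Qed.

Lemma supp_inB phi p q : supp_in phi p -> supp_in phi q -> supp_in phi (p - q).
Proof. by move=> hp hq; rewrite supp_inD ?supp_inN. Qed.

Lemma supp_in_sum phi (I : Type) (r : seq I) (P : pred I) (F : I -> {mpoly R[nv]}) :
  (forall i, P i -> supp_in phi (F i)) -> supp_in phi (\sum_(i <- r | P i) F i).
Proof.
move=> hF; elim/big_rec: _ => [|i p Pi hp]; first exact: supp_in0.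
exact: supp_inD (hF i Pi) hp.
Qed.

Lemma supp_inX phi m : phi m -> supp_in phi 'X_[m].
Proof. by rewrite /supp_in msuppX /= andbT. Qed.

Lemma supp_inM phi1 phi2 phi p q :
    (forall m1 m2, phi1 m1 -> phi2 m2 -> phi (m1 + m2)%MM) ->
  supp_in phi1 p -> supp_in phi2 q -> supp_in phi (p * q).
Proof.
move=> hphi /supp_inP hp /supp_inP hq; apply/supp_inP => m.
by case/msuppM_le/allpairsP => -[m1 m2] /= [/hp h1 /hq h2 ->]; apply: hphi.
Qed.

Lemma supp_inW phi1 phi2 p : subpred phi1 phi2 -> supp_in phi1 p -> supp_in phi2 p.
Proof. by move=> h12; apply: sub_all. Qed.

Lemma supp_in_predC phi p : supp_in phi p -> supp_in (predC phi) p -> p = 0.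
Proof.
case E: (msupp p) => [|m s]; first by move=> _ _; apply: msuppnil0.
by rewrite /supp_in E /= => /andP[-> _] /andP[].
Qed.

Definition mproj phi p := \sum_(m <- msupp p | phi m) p@_m *: 'X_[m].

Lemma mcoeff_mproj phi p m : (mproj phi p)@_m = if phi m then p@_m else 0.
Proof.
rewrite /mproj raddf_sum /= big_mkcond /=.
under eq_bigr do rewrite mcoeffZ mcoeffX.
case: (boolP (m \in msupp p)) => hm.
  rewrite (bigD1_seq m) ?msupp_uniq //= eqxx mulr1 big1 ?addr0 // => m' hm'.
  by rewrite (negbTE hm') mulr0 if_same.
rewrite big1_seq; first by rewrite (memN_msupp_eq0 hm) if_same.
move=> m' /andP[_ hm']; case: eqP => [e|_]; last by rewrite mulr0 if_same.
by move: hm; rewrite -e hm'.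
Qed.

Lemma supp_in_mproj phi p : supp_in phi (mproj phi p).
Proof.
apply/supp_inP => m; rewrite mcoeff_msupp mcoeff_mproj.
by case: (phi m); rewrite ?eqxx.
Qed.

Lemma mproj_predC phi p : p - mproj phi p = mproj (predC phi) p.
Proof.
apply/mpolyP => m; rewrite mcoeffB !mcoeff_mproj /=.
by case: (phi m); rewrite ?subrr ?subr0.
Qed.

End SupportRestriction.

Section VariableCombinations.
Variables (R : comNzRingType) (nv : nat).
Local Notation P := {mpoly R[nv]}.

Definition var_free (v : 'I_nv) (m : 'X_{1..nv}) := m v == 0%N.

Lemma var_freeD v m1 m2 : var_free v m1 -> var_free v m2 -> var_free v (m1 + m2)%MM.
Proof. by rewrite /var_free mnmDE => /eqP -> /eqP ->. Qed.

Lemma var_freeU v w : var_free v U_(w)%MM = (w != v).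
Proof. by rewrite /var_free mnm1E eqb0. Qed.

Lemma var_free_mulX_eq0 v (q : P) : supp_in (var_free v) (q * 'X_v) -> q = 0.
Proof.
move=> /supp_inP hq; apply/mpolyP => m; rewrite mcoeff0 -(mcoeffMX q U_(v)).
apply/memN_msupp_eq0/negP => /hq.
by rewrite /var_free mnmDE mnm1E eqxx.
Qed.

Lemma mnm_subUK (m : 'X_{1..nv}) v : (0 < m v)%N -> (m - U_(v) + U_(v))%MM = m.
Proof.
move=> mv; apply/mnmP => i; rewrite mnmDE mnmBE mnm1E.
by case: eqP => [<-|_]; rewrite ?subnK ?subn0 ?addn0.
Qed.

Section Combinations.
Variables (N : nat) (f : 'I_N -> 'I_nv).
Implicit Types (s t : 'I_N -> P).

Definition combX s : P := \sum_c s c * 'X_(f c).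

Lemma combXD s t : combX (fun c => s c + t c) = combX s + combX t.
Proof. by rewrite /combX -big_split; apply: eq_bigr => c _; rewrite mulrDl. Qed.

Lemma combXB s t : combX (fun c => s c - t c) = combX s - combX t.
Proof. by rewrite /combX -sumrB; apply: eq_bigr => c _; rewrite mulrBl. Qed.

Lemma combXMl (g : P) s : combX (fun c => g * s c) = g * combX s.
Proof. by rewrite /combX mulr_sumr; apply: eq_bigr => c _; rewrite mulrA. Qed.

Lemma combXMr (g : P) s : combX (fun c => s c * g) = combX s * g.
Proof. by rewrite /combX mulr_suml; apply: eq_bigr => c _; rewrite mulrAC. Qed.

Lemma combX_sum (I : Type) (r : seq I) (Q : pred I) (F : I -> 'I_N -> P) :
  combX (fun c => \sum_(i <- r | Q i) F i c) = \sum_(i <- r | Q i) combX (F i).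
Proof. by rewrite /combX; under eq_bigr do rewrite mulr_suml; rewrite exchange_big. Qed.

Lemma combX_split_at (K : 'I_N) s : (forall c : 'I_N, (K < c)%N -> s c = 0) ->
  combX s = s K * 'X_(f K) + \sum_(c : 'I_N | (c < K)%N) s c * 'X_(f c).
Proof.
move=> s_gt; rewrite /combX (bigD1 K) //=; congr (_ + _).
rewrite (bigID (fun c : 'I_N => (c < K)%N)) /= [X in _ + X]big1 ?addr0.
  by apply: eq_bigl => c; rewrite andb_idl // => cK; rewrite -val_eqE neq_ltn cK.
move=> c /andP[cK]; rewrite -leqNgt => Kc.
by rewrite s_gt ?mul0r // ltn_neqAle Kc andbT val_eqE eq_sym.
Qed.

Lemma combX_preimage (p : P) :
    supp_in (fun m => [exists a, 0 < m (f a)]%N) p ->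
  exists h, p = combX h /\ forall a, supp_in (fun m => (m + U_(f a))%MM \in msupp p) (h a).
Proof.
move=> /supp_inP hp.
pose pk (m : 'X_{1..nv}) := [pick a | (0 < m (f a))%N].
have pkP m a : pk m = Some a -> (0 < m (f a))%N by rewrite /pk; case: pickP => // b hb [<-].
exists (fun a => \sum_(m <- msupp p | pk m == Some a) p@_m *: 'X_[m - U_(f a)]).
split; last first.
  move=> a; apply/supp_inP => m' /msupp_sum_le /flatten_mapP [m].
  rewrite mem_filter => /andP[/eqP /pkP hm ms] /msuppZ_le.
  by rewrite msuppX mem_seq1 => /eqP ->; rewrite mnm_subUK.
rewrite /combX; under eq_bigr do rewrite mulr_suml.
transitivity (\sum_a \sum_(m <- msupp p | pk m == Some a) p@_m *: 'X_[m]); last first.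
  apply: eq_bigr => a _; apply: eq_bigr => m /eqP /pkP hm.
  by rewrite -scalerAl -mpolyXD mnm_subUK.
rewrite (exchange_big_dep xpredT) //= [LHS]mpolyE big_seq_cond [RHS]big_seq_cond.
apply: eq_bigr => m /andP[/hp /existsP [a0 ha0] _].
have [a pka] : exists a, pk m = Some a.
  by rewrite /pk; case: pickP => [a _|none]; [exists a | rewrite none in ha0].
by rewrite (big_pred1 a) // => b; rewrite pka (inj_eq Some_inj) eq_sym.
Qed.

End Combinations.

Lemma split_var v (p : P) : exists g, supp_in (var_free v) (p - g * 'X_v).
Proof.
have [|h [ph _]] := @combX_preimage 1 (fun _ => v) (mproj (fun m => 0 < m v)%N p).
  by apply: supp_inW (supp_in_mproj _ _) => m mv; apply/existsP; exists ord0.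
exists (h ord0); have -> : h ord0 * 'X_v = combX (fun _ => v) h by rewrite /combX big_ord1.
rewrite -ph mproj_predC; apply: supp_inW (supp_in_mproj _ _) => m /=.
by rewrite /var_free lt0n negbK.
Qed.

End VariableCombinations.

Section Koszul.
Variables (R : comNzRingType) (nv N : nat) (f : 'I_N -> 'I_nv).
Local Notation P := {mpoly R[nv]}.
Local Notation combX := (combX f).
Implicit Types (a b c : 'I_N) (s t : 'I_N -> P).

Definition koszul_rel (a b c : 'I_N) : P :=
  (if c == a then 'X_(f b) else 0) - (if c == b then 'X_(f a) else 0).

Lemma koszul_rel_neq a b c : c != b -> koszul_rel a b c = if c == a then 'X_(f b) else 0.
Proof. by rewrite /koszul_rel => /negbTE ->; rewrite subr0. Qed.

Lemma combX_koszul_rel a b : combX (koszul_rel a b) = 0.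
Proof.
rewrite /combX; under eq_bigr do rewrite mulrBl; rewrite sumrB.
rewrite (bigD1 a) //= eqxx big1 => [|c /negbTE ->]; last by rewrite mul0r.
rewrite (bigD1 b) //= eqxx [X in _ - (_ + X)]big1 => [|c /negbTE ->]; last by rewrite mul0r.
by rewrite !addr0 mulrC subrr.
Qed.

Definition koszul_comb (g : 'I_N * 'I_N -> P) c :=
  \sum_(x : 'I_N * 'I_N | (x.1 < x.2)%N) g x * koszul_rel x.1 x.2 c.

Definition koszul_span s := exists g, s =1 koszul_comb g.

Lemma combX_koszul_span s : koszul_span s -> combX s = 0.
Proof.
case=> g sg; have -> : combX s = combX (koszul_comb g) by apply: eq_bigr => c _; rewrite sg.
rewrite combX_sum big1 // => x _.
by rewrite combXMl combX_koszul_rel mulr0.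
Qed.

Lemma koszul_span_ext s t : s =1 t -> koszul_span s -> koszul_span t.
Proof. by move=> st [g sg]; exists g => c; rewrite -st. Qed.

Lemma koszul_span0 : koszul_span (fun _ => 0).
Proof. by exists (fun _ => 0) => c; rewrite /koszul_comb big1 // => x _; rewrite mul0r. Qed.

Lemma koszul_spanD s t :
  koszul_span s -> koszul_span t -> koszul_span (fun c => s c + t c).
Proof.
case=> g sg [h th]; exists (fun x => g x + h x) => c.
by rewrite sg th /koszul_comb -big_split; apply: eq_bigr => x _; rewrite mulrDl.
Qed.

Lemma koszul_span_rel (h : P) (a b : 'I_N) :
  (a < b)%N -> koszul_span (fun c => h * koszul_rel a b c).
Proof.
move=> ab; exists (fun x => if x == (a, b) then h else 0) => c.
rewrite /koszul_comb (bigD1 (a, b)) //= eqxx big1 ?addr0 // => x /andP[_].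
by move/negbTE ->; rewrite mul0r.
Qed.

Lemma koszul_span_sum (I : Type) (r : seq I) (Q : pred I) (F : I -> 'I_N -> P) :
  (forall i, Q i -> koszul_span (F i)) ->
  koszul_span (fun c => \sum_(i <- r | Q i) F i c).
Proof.
move=> hF; elim: r => [|i r ih].
  by apply: koszul_span_ext koszul_span0 => c; rewrite big_nil.
case Qi: (Q i); last by apply: koszul_span_ext ih => c; rewrite big_cons Qi.
by apply: koszul_span_ext (koszul_spanD (hF i Qi) ih) => c; rewrite big_cons Qi.
Qed.

Hypothesis f_inj : injective f.

Lemma koszul_step (K : 'I_N) s :
    (forall c : 'I_N, (K < c)%N -> s c = 0) -> combX s = 0 ->
  exists s', [/\ koszul_span (fun c => s c - s' c), combX s' = 0
               & forall c : 'I_N, (K <= c)%N -> s' c = 0].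
Proof.
move=> s_gt s0; have /fin_all_exists [g sg] c := split_var (f K) (s c).
pose t c := \sum_(a : 'I_N | (a < K)%N) g a * koszul_rel a K c.
have t_span : koszul_span t.
  by apply: koszul_span_sum => a aK; apply: koszul_span_rel.
have t_lt c : (c < K)%N -> t c = g c * 'X_(f K).
  move=> cK; rewrite /t (bigD1 c) //= koszul_rel_neq ?eqxx ?big1 ?addr0 //.
    move=> a /andP[_ ac]; rewrite koszul_rel_neq ?(ifN_eqC _ _ ac) ?mulr0 //.
    by rewrite -val_eqE neq_ltn cK.
  by rewrite -val_eqE neq_ltn cK.
have t_gt c : (K < c)%N -> t c = 0.
  move=> Kc; rewrite /t big1 // => a aK.
  rewrite koszul_rel_neq; last by rewrite -val_eqE neq_ltn Kc orbT.
  by rewrite -val_eqE /= gtn_eqF ?mulr0 // (ltn_trans aK Kc).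
pose s' c := s c - t c.
have s'0 : combX s' = 0 by rewrite combXB s0 combX_koszul_span // subrr.
have s'_gt c : (K < c)%N -> s' c = 0 by move=> Kc; rewrite /s' s_gt ?t_gt ?subrr.
have s'_K : s' K = 0.
  (* s' K * x_K is a combination of the x_c, c < K, with x_K-free coefficients. *)
  apply: (var_free_mulX_eq0 (v := f K)).
  have -> : s' K * 'X_(f K) = - \sum_(c : 'I_N | (c < K)%N) s' c * 'X_(f c).
    by apply/eqP; rewrite -addr_eq0 -(combX_split_at f s'_gt) s'0.
  apply: supp_inN; apply: supp_in_sum => c cK.
  rewrite /s' t_lt //; apply: (supp_inM (@var_freeD _ (f K)) (sg c)).
  by apply: supp_inX; rewrite var_freeU (inj_eq f_inj) -val_eqE neq_ltn cK.
exists s'; split => // [|c].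
  by apply: koszul_span_ext t_span => c; rewrite /s' opprB addrC subrK.
by rewrite leq_eqVlt => /orP[/eqP/val_inj <-|/s'_gt].
Qed.

Lemma koszul_exact_below K s :
  (forall c : 'I_N, (K <= c)%N -> s c = 0) -> combX s = 0 -> koszul_span s.
Proof.
elim: K s => [|K IH] s s_ge s0.
  by apply: koszul_span_ext koszul_span0 => c; rewrite s_ge.
have [KN|NK] := ltnP K N.
  have [s' [span_d s'0 s'_ge]] := koszul_step (K := Ordinal KN) s_ge s0.
  apply: koszul_span_ext (koszul_spanD span_d (IH s' s'_ge s'0)) => c.
  exact: subrK.
by apply: IH => // c; rewrite leqNgt (leq_trans (ltn_ord c) NK).
Qed.

Theorem koszul_exact s : combX s = 0 -> koszul_span s.
Proof.
by apply: (koszul_exact_below (K := N)) => c; rewrite leqNgt ltn_ord.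
Qed.

End Koszul.

Arguments koszul_rel {R nv N} f a b c.

Lemma sum_scale_fibres (R : pzRingType) (V : lmodType R) (T : finType) (D : pred T)
    (code : T -> nat) (r : nat) (c : T -> R) (W : T -> V) :
    {in D, forall x, code x < r}%N -> {in D &, injective code} ->
  \sum_(x | D x) c x *: W x =
  \sum_(l < r) (\sum_(x | D x && (code x == l)) c x) *: \sum_(x | D x && (code x == l)) W x.
Proof.
move=> code_lt code_inj.
have fibre (l : 'I_r) :
    (\sum_(x | D x && (code x == l)) c x) *: \sum_(x | D x && (code x == l)) W x =
    \sum_(x | D x && (code x == l)) c x *: W x.
  case: (pickP (fun x => D x && (code x == l))) => [x0 /andP[Dx0 /eqP cx0]|none].
    have fib x : (D x && (code x == l)) = (x == x0).
      apply/andP/eqP => [[Dx /eqP cx]|->]; last by rewrite Dx0 cx0.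
      by apply: code_inj => //; rewrite cx cx0.
    by rewrite !(big_pred1 x0).
  by rewrite !big_pred0 ?scale0r.
under [RHS]eq_bigr do rewrite fibre.
rewrite (exchange_big_dep D) /=; last by move=> l x _ /andP[].
apply: eq_bigr => x Dx; rewrite (big_pred1 (Ordinal (code_lt x Dx))) // => l.
by rewrite Dx /= -val_eqE eq_sym.
Qed.

Section PairCode.
Variable N : nat.
Implicit Types x y : 'I_N * 'I_N.

Definition pair_code x : nat := 'C(x.2, 2) + x.1.

Lemma pair_code_lt_bin x : (x.1 < x.2)%N -> (pair_code x < 'C(x.2.+1, 2))%N.
Proof. by move=> lt12; rewrite binS bin1 /pair_code ltn_add2l. Qed.

Lemma pair_code_lt x : (x.1 < x.2)%N -> (pair_code x < 'C(N, 2))%N.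
Proof. by move=> /pair_code_lt_bin lt; apply: leq_trans lt (leq_bin2l _ (ltn_ord _)). Qed.

Lemma pair_code_inj : {in fun x => (x.1 < x.2)%N &, injective pair_code}.
Proof.
have mono x y : (x.1 < x.2)%N -> (x.2 < y.2)%N -> (pair_code x < pair_code y)%N.
  move=> /pair_code_lt_bin lt lt2; apply: leq_trans lt (leq_trans _ (leq_addr _ _)).
  exact: leq_bin2l.
move=> [i j] [i' j'] ij ij' e.
case: (ltngtP j j') => [lt|lt|/val_inj eqj].
- by move: (mono (i, j) (i', j') ij lt); rewrite e ltnn.
- by move: (mono (i', j') (i, j) ij' lt); rewrite e ltnn.
- by subst j'; move: e; rewrite /pair_code /= => /addnI /val_inj ->.
Qed.

End PairCode.

Section FirstBlock.
Variables (k : fieldType) (n : nat).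
Hypothesis n_gt0 : (0 < n)%N.
Local Notation N := (n - 2)%N.
Local Notation P := (Spoly k n).
Local Notation dim_wedge2 := ((n - 2) * (n - 3) %/ 2)%N.
Implicit Types (p q : P) (s : 'I_N -> P) (m : 'X_{1..n * N}).

Definition i1 : 'I_n := Ordinal n_gt0.
Definition x1 (a : 'I_N) : 'I_(n * N) := mxvec_index i1 a.

Lemma mxvec_index_eq (i i' : 'I_n) (a b : 'I_N) :
  (mxvec_index i a == mxvec_index i' b) = (i == i') && (a == b).
Proof.
apply/eqP/andP => [/cast_ord_inj /enum_rank_inj [-> ->] //|[/eqP -> /eqP ->] //].
Qed.

Lemma x1_inj : injective x1.
Proof. by move=> a b /eqP; rewrite mxvec_index_eq eqxx => /eqP. Qed.

Lemma e1E i : e1 i = (i1 == i).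
Proof. by rewrite /e1 -val_eqE eq_sym. Qed.

Lemma mdegiD m1 m2 i : mdegi (m1 + m2)%MM i = (mdegi m1 i + mdegi m2 i)%N.
Proof. by rewrite /mdegi -big_split; apply: eq_bigr => a _; rewrite mnmDE. Qed.

Lemma mdegi_x1 a i : mdegi U_(x1 a)%MM i = (i1 == i).
Proof.
rewrite /mdegi; under eq_bigr do rewrite mnm1E mxvec_index_eq.
have [_|_] := eqVneq i1 i; last by rewrite big1.
rewrite (bigD1 a) //= eqxx big1 // => b.
by rewrite eq_sym => /negbTE ->.
Qed.

Lemma muE s : mu s = combX x1 s.
Proof. by rewrite /mu (big_pred1 i1) // => i; rewrite -val_eqE. Qed.

Definition mdegv m : {ffun 'I_n -> nat} := [ffun i => mdegi m i].

Definition deg1_pos m := (0 < mdegv m i1)%N.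

Lemma deg1_posE m : deg1_pos m = [exists a, 0 < m (x1 a)]%N.
Proof.
rewrite /deg1_pos ffunE /mdegi lt0n sum_nat_eq0 negb_forall.
by apply: eq_existsb => a; rewrite lt0n.
Qed.

Lemma deg1_posDl m1 m2 : deg1_pos m1 -> deg1_pos (m1 + m2)%MM.
Proof. by rewrite /deg1_pos !ffunE mdegiD => h; apply: leq_trans h (leq_addr _ _). Qed.

Lemma supp_in_deg1_mull p q : supp_in deg1_pos p -> supp_in deg1_pos (p * q).
Proof.
move=> hp; apply: (supp_inM (phi2 := predT) _ hp); last exact/supp_inP.
by move=> m1 m2 + _; apply: deg1_posDl.
Qed.

Lemma supp_in_deg1_mulr p q : supp_in deg1_pos q -> supp_in deg1_pos (p * q).
Proof. by rewrite mulrC; apply: supp_in_deg1_mull. Qed.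

Lemma supp_in_deg0_mul p q : supp_in (predC deg1_pos) p -> supp_in (predC deg1_pos) q ->
  supp_in (predC deg1_pos) (p * q).
Proof.
apply: supp_inM => m1 m2.
by rewrite /= /deg1_pos !ffunE mdegiD !lt0n !negbK => /eqP -> /eqP ->.
Qed.

Lemma supp_in_deg1_mu s : supp_in deg1_pos (mu s).
Proof.
rewrite muE; apply: supp_in_sum => a _; apply: supp_in_deg1_mulr; apply: supp_inX.
by rewrite /deg1_pos ffunE mdegi_x1 eqxx.
Qed.

Lemma mu_preimage p : supp_in deg1_pos p -> exists s, p = mu s.
Proof.
move=> hp; have [|s [pE _]] := combX_preimage (f := x1) (p := p).
  by apply: supp_inW hp => m; rewrite deg1_posE.
by exists s; rewrite muE.
Qed.

Lemma homog_mu_preimage (c : degv n) p :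
  zhomog (plus_e1 c) p -> exists s, zhomog_tuple c s /\ p = mu s.
Proof.
move=> p_hom; have [|s [pE s_supp]] := combX_preimage (f := x1) (p := p).
  apply: supp_inW p_hom => m /forallP /(_ i1) /eqP.
  rewrite -deg1_posE /deg1_pos ffunE => ->.
  by rewrite /plus_e1 e1E eqxx addn1.
exists s; split; last by rewrite muE.
move=> a; apply: supp_inW (s_supp a) => m /(allP p_hom) /forallP hm.
by apply/forallP => i; move: (hm i); rewrite mdegiD mdegi_x1 /plus_e1 e1E eqn_add2r.
Qed.

Lemma homog_x1 a : zhomog (@e1 n) ('X_(x1 a) : P).
Proof. by apply: supp_inX; apply/forallP => i; rewrite mdegi_x1 e1E. Qed.

(* The Koszul relation of the pair numbered l, i.e. the image in K of the l-th
   basis vector e_a /\ e_b of wedge^2 V^(1). *)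
Definition koszul_gen (l : 'I_dim_wedge2) (a : 'I_N) : P :=
  \sum_(x : 'I_N * 'I_N | (x.1 < x.2)%N && (pair_code x == l)) koszul_rel x1 x.1 x.2 a.

Lemma koszul_gen_homog l : zhomog_tuple (@e1 n) (koszul_gen l).
Proof.
move=> a; apply: supp_in_sum => x _; apply: supp_inB;
  by case: ifP => _; [apply: homog_x1 | apply: supp_in0].
Qed.

Lemma mu_koszul_gen l : mu (koszul_gen l) = 0.
Proof.
rewrite muE combX_sum big1 // => x _; exact: combX_koszul_rel.
Qed.

Variable J : P -> Prop.
Hypothesis hJ : is_hom_ideal J.

Lemma J0 : J 0. Proof. by case: hJ. Qed.

Lemma JD p q : J p -> J q -> J (p + q). Proof. by case: hJ => _ JD _ _; apply: JD. Qed.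

Lemma JMl p q : J q -> J (p * q). Proof. by case: hJ => _ _ JM _; apply: JM. Qed.

Lemma JB p q : J p -> J q -> J (p - q).
Proof. by move=> Jp Jq; apply: JD => //; rewrite -mulN1r; apply: JMl. Qed.

Lemma J_sum (I : Type) (r : seq I) (Q : pred I) (F : I -> P) :
  (forall i, Q i -> J (F i)) -> J (\sum_(i <- r | Q i) F i).
Proof.
move=> hF; elim/big_rec: _ => [|i p Qi Jp]; first exact: J0.
exact: JD (hF i Qi) Jp.
Qed.

Lemma J_hcomp (c : degv n) p : J p -> J (hcomp c p).
Proof. by case: hJ => _ _ _; apply. Qed.

Lemma J_mproj_mdegv (phi : pred {ffun 'I_n -> nat}) p :
  J p -> J (mproj (fun m => phi (mdegv m)) p).
Proof.
move=> Jp; pose D := undup [seq mdegv m | m <- msupp p & phi (mdegv m)].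
suff -> : mproj (fun m => phi (mdegv m)) p = \sum_(d <- D) hcomp (fun i => d i) p.
  by apply: J_sum => d _; apply: J_hcomp.
apply/mpolyP => m; rewrite mcoeff_mproj raddf_sum /=.
have hcompE (d : {ffun 'I_n -> nat}) :
    (hcomp (fun i => d i) p)@_m = if mdegv m == d then p@_m else 0.
  rewrite [hcomp _ _]/(mproj _ p) mcoeff_mproj; congr (if _ then _ else _).
  apply/forallP/eqP => [e|<- i]; last by rewrite ffunE.
  by apply/ffunP => i; rewrite ffunE; apply/eqP.
under eq_bigr do rewrite hcompE.
have [mD|mD] := boolP (mdegv m \in D).
  have phim : phi (mdegv m).
    by move: mD; rewrite mem_undup => /mapP [m' + ->]; rewrite mem_filter => /andP[].
  rewrite phim (bigD1_seq (mdegv m)) ?undup_uniq //= eqxx big1 ?addr0 // => d.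
  by rewrite eq_sym => /negbTE ->.
rewrite big1_seq => [|d /andP[_ dD]]; last by case: eqP => // e; rewrite e dD in mD.
case: ifP => // phim; apply: memN_msupp_eq0; apply: contra mD => mp.
by rewrite mem_undup map_f // mem_filter phim.
Qed.

Lemma J_mproj_deg1 q : J q -> J (mproj deg1_pos q).
Proof. exact: (J_mproj_mdegv (fun d => 0 < d i1)%N). Qed.

Lemma Kzero_ext s t : s =1 t -> Kzero J s -> Kzero J t.
Proof.
by move=> st [j [r [u [v [Jj uv sE]]]]]; exists j, r, u, v; split=> // a; rewrite -st.
Qed.

Lemma Kzero_J s : (forall a, J (s a)) -> Kzero J s.
Proof.
move=> Js; exists s, 0%N, (fun _ => 0), (fun _ _ => 0); split=> // [[]//|a].
by rewrite big_ord0 addr0.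
Qed.

Lemma Kzero_aug t u : in_aug t -> Ksyz J u -> Kzero J (fun a => t * u a).
Proof.
move=> t_aug u_syz; exists (fun _ => 0), 1%N, (fun _ => t), (fun _ => u).
by split=> // [_|a]; [apply: J0 | rewrite big_ord1 add0r].
Qed.

Lemma KzeroD s1 s2 : Kzero J s1 -> Kzero J s2 -> Kzero J (fun a => s1 a + s2 a).
Proof.
case=> j1 [r1 [t1 [u1 [Jj1 tu1 s1E]]]] [j2 [r2 [t2 [u2 [Jj2 tu2 s2E]]]]].
pose glue T (f1 : 'I_r1 -> T) (f2 : 'I_r2 -> T) l :=
  match split l with inl i => f1 i | inr i => f2 i end.
exists (fun a => j1 a + j2 a), (r1 + r2)%N, (glue _ t1 t2), (glue _ u1 u2); split.
- by move=> a; apply: JD.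
- by move=> l; rewrite /glue; case: (split l).
- move=> a; rewrite s1E s2E big_split_ord addrACA; congr (_ + (_ + _)).
    by apply: eq_bigr => i _; rewrite /glue (unsplitK (inl i) : split (lshift r2 i) = _).
  by apply: eq_bigr => i _; rewrite /glue (unsplitK (inr i) : split (rshift r1 i) = _).
Qed.

Lemma Kzero_sum (I : Type) (r : seq I) (Q : pred I) (F : I -> 'I_N -> P) :
  (forall i, Q i -> Kzero J (F i)) -> Kzero J (fun a => \sum_(i <- r | Q i) F i a).
Proof.
move=> hF; elim: r => [|i r ih].
  by apply: Kzero_J => a; rewrite big_nil; apply: J0.
case Qi: (Q i); last by apply: Kzero_ext ih => a; rewrite big_cons Qi.
by apply: Kzero_ext (KzeroD (hF i Qi) ih) => a; rewrite big_cons Qi.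
Qed.

Lemma in_augJ0 : in_augJ J 0.
Proof. by exists 0%N, (fun _ => 0), (fun _ => 0); split=> [[]|]; rewrite ?big_ord0. Qed.

Lemma in_aug_subC p : in_aug (p - (p@_0)%:MP).
Proof. by rewrite /in_aug mcoeffB mcoeffC eqxx mulr1 subrr. Qed.

Lemma in_augJ_mu_lift s : in_augJ J (mu s) -> exists s0, Kzero J s0 /\ mu s0 = mu s.
Proof.
case=> r [t [q [tq mu_s]]].
pose q1 l := mproj deg1_pos (q l); pose t1 l := mproj deg1_pos (t l).
have Jq1 l : J (q1 l) by apply: J_mproj_deg1; case: (tq l).
have Jq2 l : J (q l - q1 l) by apply: JB => //; case: (tq l).
have /fin_all_exists [sg q1E] l : exists sg, q1 l = mu sg.
  exact: mu_preimage (supp_in_mproj _ _).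
have /fin_all_exists [bt t1E] l : exists bt, t1 l = mu bt.
  exact: mu_preimage (supp_in_mproj _ _).
have mu_split : mu s = \sum_l t l * q1 l + \sum_l t1 l * (q l - q1 l)
                       + \sum_l (t l - t1 l) * (q l - q1 l).
  by rewrite mu_s -!big_split; apply: eq_bigr => l _ /=; ring.
have deg0_part : \sum_l (t l - t1 l) * (q l - q1 l) = 0.
  apply: (@supp_in_predC _ _ deg1_pos).
    have -> : \sum_l (t l - t1 l) * (q l - q1 l) =
        mu s - \sum_l t l * q1 l - \sum_l t1 l * (q l - q1 l) by rewrite mu_split; ring.
    apply: supp_inB; [apply: supp_inB; first exact: supp_in_deg1_mu|];
      apply: supp_in_sum => l _; [apply: supp_in_deg1_mulr | apply: supp_in_deg1_mull];
      exact: supp_in_mproj.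
  apply: supp_in_sum => l _.
  by apply: supp_in_deg0_mul; rewrite mproj_predC; apply: supp_in_mproj.
exists (fun a => \sum_l t l * sg l a + \sum_l bt l a * (q l - q1 l)); split.
  apply: KzeroD; last by apply: Kzero_J => a; apply: J_sum => l _; apply: JMl.
  apply: Kzero_sum => l _; apply: Kzero_aug; first by case: (tq l).
  by rewrite /Ksyz -q1E.
rewrite mu_split deg0_part addr0 muE combXD !combX_sum; congr (_ + _).
  by apply: eq_bigr => l _; rewrite combXMl -muE q1E.
by apply: eq_bigr => l _; rewrite combXMr -muE t1E.
Qed.

Lemma syzygy_mod_koszul_gens s : mu s = 0 ->
  exists lam : 'I_dim_wedge2 -> k,
    Kzero J (fun a => s a - \sum_l lam l *: koszul_gen l a).
Proof.
rewrite muE => /(koszul_exact x1_inj) [g sg].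
pose D := fun x : 'I_N * 'I_N => (x.1 < x.2)%N.
exists (fun l : 'I_dim_wedge2 => \sum_(x | D x && (pair_code x == l)) (g x)@_0).
apply: (@Kzero_ext
  (fun a => \sum_(x | D x) (g x - ((g x)@_0)%:MP) * koszul_rel x1 x.1 x.2 a)).
  move=> a; rewrite sg /koszul_gen -(sum_scale_fibres _ _ _ (pair_code_inj (N := N))).
    by rewrite /koszul_comb -sumrB; apply: eq_bigr => x _; rewrite mulrBl mul_mpolyC.
  by move=> x /pair_code_lt; rewrite bin2 -divn2 -subnS.
apply: Kzero_sum => x _; apply: Kzero_aug; first exact: in_aug_subC.
by rewrite /Ksyz muE combX_koszul_rel; apply: J0.
Qed.

End FirstBlock.

Arguments koszul_gen {k n} n_gt0 l a.

Theorem lemma4p1 (k : fieldType) (n : nat) (hn : (3 <= n)%N)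
    (J : Spoly k n -> Prop)
    (hJ : is_hom_ideal J) (hJ2 : forall p, J p -> in_aug_sq p) :
  (forall (c : degv n) (p : Spoly k n),
      zhomog (plus_e1 c) p -> J p ->
      exists s : 'I_(n - 2) -> Spoly k n,
        [/\ zhomog_tuple c s, Ksyz J s & in_augJ J (p - mu s)])
  /\
  exists w : 'I_((n - 2) * (n - 3) %/ 2) -> 'I_(n - 2) -> Spoly k n,
    (forall l, [/\ zhomog_tuple (@e1 n) (w l), Ksyz J (w l) & in_augJ J (mu (w l))])
    /\
    (forall (c : degv n) (s : 'I_(n - 2) -> Spoly k n),
        zhomog_tuple c s -> Ksyz J s -> in_augJ J (mu s) ->
        exists lam : 'I_((n - 2) * (n - 3) %/ 2) -> k,
          Kzero J (fun a => s a - \sum_l lam l *: w l a)).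
Proof.
have n_gt0 : (0 < n)%N := ltnW (ltnW hn).
split=> [c p /(homog_mu_preimage n_gt0) [s [s_hom ->]] Jp|].
  by exists s; split; rewrite /Ksyz ?subrr //; apply: in_augJ0.
exists (koszul_gen n_gt0); split=> [l|c s _ _ /(in_augJ_mu_lift n_gt0 hJ) [s0 [Ks0 mu_s0]]].
  split; rewrite /Ksyz ?mu_koszul_gen; first exact: koszul_gen_homog.
    exact: J0.
  exact: in_augJ0.
have [|lam Klam] := @syzygy_mod_koszul_gens _ _ n_gt0 _ hJ (fun a => s a - s0 a).
  by rewrite muE combXB -!muE mu_s0 subrr.
exists lam; apply: Kzero_ext (KzeroD hJ Klam Ks0) => a.
by rewrite addrAC subrK.
Qed.
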